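(* Consider an execution of \textsf{Sieve} (described in the context) in which the sender $\sigma$ is correct and broadcasts a message $m$. If in this execution the underlying probabilistic broadcast $pb$ satisfies totality (if some correct process $pb$-delivers a message, every correct process eventually $pb$-delivers a message), and no correct process has more than $E-\hat E$ Byzantine entries in its echo sample, then every correct process eventually delivers $m$ (i.e., total validity holds in this execution).
   Context: System model: a fixed set $\Pi$ of processes, some Byzantine (arbitrary behaviour) and the rest correct, asynchronous reliable authenticated point-to-point links (messages between correct processes are eventually delivered); signatures cannot be forged. $pb$ is a probabilistic broadcast instance: correct processes $pb$-deliver at most one message; if the sender is correct, any $pb$-delivered message was broadcast by it; a correct sender $pb$-delivers its own broadcast message. \textsf{Sieve} (parameters $E$, $\hat E$): each correct process draws an echo sample of $E$ entries, each uniformly from $\Pi$ with replacement, and sends EchoSubscribe to each; it records subscribers. To broadcast $m$, $\sigma$ $pb$-broadcasts $(m,\mathrm{sign}_\sigma(m))$. Upon $pb$-delivering a correctly signed pair, a correct process sets $echo$ to it and sends Echo with that pair to all current and future subscribers. A correct process records, for each member of its echo sample, the first correctly signed Echo received from it, and delivers (once) the message of its $echo$ when at least $\hat E$ members of its echo sample have sent Echo for that same pair. *)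

From mathcomp Require Import all_boot.
Set Implicit Arguments. Unset Strict Implicit. Unset Printing Implicit Defensive.

(* Time is discrete: nat. "eventually" = at some time t.
   Local state / observable histories of the execution:
   - pbd p t  : the pair p has pb-delivered by time t (None = nothing yet);
   - rec p q t: the first correctly signed Echo that p has received from q by
                time t (None = none yet);
   - dlv p t  : the message p has delivered by time t (None = none yet). *)

Definition stable (T : Type) (f : nat -> option T) : Prop :=
  forall t t' x, t <= t' -> f t = Some x -> f t' = Some x.

Definition signed_ok (Proc Msg Sig : Type) (valid : Proc -> Msg -> Sig -> bool)
  (sigma : Proc) (x : Msg * Sig) : bool := valid sigma x.1 x.2.

(* value of the variable [echo] of p at time t: set to the pb-delivered pair
   if it is correctly signed *)
Definition echo_of (Proc Msg Sig : Type) (valid : Proc -> Msg -> Sig -> bool)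
  (sigma : Proc) (pbd : Proc -> nat -> option (Msg * Sig)) (p : Proc) (t : nat)
  : option (Msg * Sig) :=
  match pbd p t with
  | Some x => if signed_ok valid sigma x then Some x else None
  | None => None
  end.

(* number of entries of p's echo sample (counted with multiplicity) from which
   p has recorded an Echo for the pair x by time t *)
Definition echo_count (Proc : eqType) (Msg Sig : eqType) (E : nat)
  (sample : Proc -> E.-tuple Proc)
  (rec : Proc -> Proc -> nat -> option (Msg * Sig)) (p : Proc) (t : nat)
  (x : Msg * Sig) : nat :=
  count (fun q => rec p q t == Some x) (sample p).

Definition deliver_cond (Proc : eqType) (Msg Sig : eqType)
  (valid : Proc -> Msg -> Sig -> bool) (sigma : Proc) (E Ehat : nat)
  (sample : Proc -> E.-tuple Proc)
  (pbd : Proc -> nat -> option (Msg * Sig))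
  (rec : Proc -> Proc -> nat -> option (Msg * Sig)) (p : Proc) (t : nat)
  (m' : Msg) : Prop :=
  exists s, echo_of valid sigma pbd p t = Some (m', s) /\
            Ehat <= echo_count sample rec p t (m', s).

Definition sieve_execution (Proc : finType) (Msg Sig : eqType)
  (correct : pred Proc) (sigma : Proc) (m : Msg)
  (sign : Proc -> Msg -> Sig) (valid : Proc -> Msg -> Sig -> bool)
  (E Ehat : nat) (sample : Proc -> E.-tuple Proc)
  (pbd : Proc -> nat -> option (Msg * Sig))
  (rec : Proc -> Proc -> nat -> option (Msg * Sig))
  (dlv : Proc -> nat -> option Msg) : Prop :=
  [/\
   (* signatures: sigma's signature on m verifies; signatures cannot be
      forged, and sigma (correct) signs only m *)
   valid sigma m (sign sigma m) /\
   (correct sigma -> forall m' s, valid sigma m' s -> m' = m),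
   (* pb: at most one (stable) pb-delivery per correct process; sigma
      pb-broadcasts (m, sign m) and pb-delivers it itself (if correct);
      pb validity for a correct sender *)
   [/\ (forall p, correct p -> stable (pbd p)),
       (correct sigma -> exists t, pbd sigma t = Some (m, sign sigma m)) &
       (correct sigma -> forall p t x, correct p -> pbd p t = Some x ->
                          x = (m, sign sigma m))],
   (* Echo handling by correct p: records the first correctly signed Echo
      from each sample member; authenticated links: an Echo from a correct q
      carries q's echo value; reliable links + subscription: a correct q in
      p's sample that has set echo eventually gets an Echo recorded by p *)
   [/\ (forall p q, correct p -> stable (rec p q)),
       (forall p q t x, correct p -> rec p q t = Some x ->
           signed_ok valid sigma x),
       (forall p q t x, correct p -> correct q -> rec p q t = Some x ->
           exists2 t', t' <= t & echo_of valid sigma pbd q t' = Some x) &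
       (forall p q t x, correct p -> correct q -> q \in sample p ->
           echo_of valid sigma pbd q t = Some x ->
           exists t', rec p q t' != None)] &
   (* delivery by correct p: at most once (stable), only when the delivery
      condition has held, and as soon as the delivery condition holds *)
   [/\ (forall p, correct p -> stable (dlv p)),
       (forall p t m', correct p -> dlv p t = Some m' ->
           exists2 t', t' <= t &
             deliver_cond valid sigma Ehat sample pbd rec p t' m') &
       (forall p t m', correct p ->
           deliver_cond valid sigma Ehat sample pbd rec p t m' ->
           dlv p t != None)]].

Definition pb_totality (Proc : Type) (Msg Sig : Type) (correct : pred Proc)
  (pbd : Proc -> nat -> option (Msg * Sig)) : Prop :=
  (exists p t x, correct p /\ pbd p t = Some x) ->
  forall q, correct q -> exists t x, pbd q t = Some x.

(* Since sigma is correct and pb-delivers its own pair (m, sign sigma m), pb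
   totality makes every correct process pb-deliver, and pb validity forces the
   delivered pair to be sigma's; so every correct process eventually echoes it.
   Each correct member of a correct p's sample therefore eventually has its Echo
   recorded by p, and since the records are stable there is a single time at
   which all of them are present. At that time p counts at least as many Echos
   for (m, sign sigma m) as it has correct sample entries, which is at least
   Ehat because at most E - Ehat entries are Byzantine. Hence p delivers, and
   what it delivers can only be m, as its echo variable never holds another
   pair. *)
From mathcomp Require Import all_boot.

Set Implicit Arguments.
Unset Strict Implicit.
Unset Printing Implicit Defensive.

Lemma sub_in_count (T : eqType) (a b : pred T) (s : seq T) :
  {in s, subpred a b} -> count a s <= count b s.
Proof.
move=> sub_ab; rewrite (@eq_in_count _ a (predI a b)).
  by apply: sub_count => x /andP[].
by move=> x xs /=; case ax: (a x); rewrite // (sub_ab x xs ax).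
Qed.

Lemma monotone_eventually_all (A : eqType) (P : A -> nat -> Prop) (s : seq A) :
  (forall a t t', t <= t' -> P a t -> P a t') ->
  {in s, forall a, exists t, P a t} ->
  exists t, {in s, forall a, P a t}.
Proof.
move=> P_mono; elim: s => [|a s IHs] ev_s; first by exists 0.
have [ta Pa] := ev_s a (mem_head a s).
have [ts Ps] := IHs (fun b bs => ev_s b (mem_behead (s := a :: s) bs)).
exists (maxn ta ts) => b; rewrite inE => /predU1P [-> | bs].
  exact: P_mono (leq_maxl ta ts) Pa.
exact: P_mono (leq_maxr ta ts) (Ps b bs).
Qed.

Section CorrectSender.

Variables (Proc : finType) (Msg Sig : eqType).
Variables (correct : pred Proc) (sigma : Proc) (m : Msg).
Variables (sign : Proc -> Msg -> Sig) (valid : Proc -> Msg -> Sig -> bool).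
Variables (E Ehat : nat) (sample : Proc -> E.-tuple Proc).
Variables (pbd : Proc -> nat -> option (Msg * Sig)).
Variables (rec : Proc -> Proc -> nat -> option (Msg * Sig)).
Variables (dlv : Proc -> nat -> option Msg).

Local Notation signed_m := (m, sign sigma m).
Local Notation echo := (echo_of valid sigma pbd).

Hypothesis sign_valid : valid sigma m (sign sigma m).
Hypothesis pbd_stable : forall p, correct p -> stable (pbd p).
Hypothesis pbd_sender : exists t, pbd sigma t = Some signed_m.
Hypothesis pbd_validity :
  forall p t x, correct p -> pbd p t = Some x -> x = signed_m.
Hypothesis correct_sigma : correct sigma.
Hypothesis totality : pb_totality correct pbd.
Hypothesis rec_stable : forall p q, correct p -> stable (rec p q).
Hypothesis rec_authentic : forall p q t x, correct p -> correct q ->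
  rec p q t = Some x -> exists2 t', t' <= t & echo q t' = Some x.
Hypothesis rec_reliable : forall p q t x, correct p -> correct q ->
  q \in sample p -> echo q t = Some x -> exists t', rec p q t' != None.
Hypothesis dlv_valid : forall p t m', correct p -> dlv p t = Some m' ->
  exists2 t', t' <= t & deliver_cond valid sigma Ehat sample pbd rec p t' m'.
Hypothesis dlv_live : forall p t m', correct p ->
  deliver_cond valid sigma Ehat sample pbd rec p t m' -> dlv p t != None.
Hypothesis few_byzantine :
  forall p, correct p -> count (predC correct) (sample p) + Ehat <= E.

Lemma echo_correct q t x : correct q -> echo q t = Some x -> x = signed_m.
Proof.
rewrite /echo_of; case pbd_q: (pbd q t) => [y|] // correct_q.
by case: ifP => // _ [<-]; exact: pbd_validity pbd_q.
Qed.

Lemma echo_of_pbd q t : pbd q t = Some signed_m -> echo q t = Some signed_m.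
Proof. by rewrite /echo_of => ->; rewrite /signed_ok sign_valid. Qed.

Lemma pbd_eventually q : correct q -> exists t, pbd q t = Some signed_m.
Proof.
move=> correct_q; have [ts pbd_sigma] := pbd_sender.
have [t [x pbd_q]] := totality (ex_intro _ sigma (ex_intro _ ts
  (ex_intro _ signed_m (conj correct_sigma pbd_sigma)))) correct_q.
by exists t; rewrite pbd_q (pbd_validity correct_q pbd_q).
Qed.

Lemma rec_eventually p q : correct p -> correct q -> q \in sample p ->
  exists t, rec p q t = Some signed_m.
Proof.
move=> correct_p correct_q q_sample; have [t pbd_q] := pbd_eventually correct_q.
have [t'] := rec_reliable correct_p correct_q q_sample (echo_of_pbd pbd_q).
case rec_pq: (rec p q t') => [x|] // _; exists t'; rewrite rec_pq.
have [t'' _ echo_q] := rec_authentic correct_p correct_q rec_pq.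
by rewrite (echo_correct correct_q echo_q).
Qed.

Lemma rec_all_correct_eventually p : correct p ->
  exists t, {in sample p, forall q, correct q -> rec p q t = Some signed_m}.
Proof.
move=> correct_p; apply: monotone_eventually_all.
  by move=> q t t' le_tt' rec_q /rec_q; exact: rec_stable.
move=> q q_sample; have [correct_q | _] := boolP (correct q); last by exists 0.
by have [t rec_q] := rec_eventually correct_p correct_q q_sample; exists t.
Qed.

Lemma deliver_cond_eventually p : correct p ->
  exists t, deliver_cond valid sigma Ehat sample pbd rec p t m.
Proof.
move=> correct_p; have [t1 rec_t1] := rec_all_correct_eventually correct_p.
have [t2 pbd_t2] := pbd_eventually correct_p.
exists (maxn t1 t2), (sign sigma m); split.
  exact/echo_of_pbd/(pbd_stable correct_p (leq_maxr t1 t2) pbd_t2).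
have count_correct : count correct (sample p) <=
                     echo_count sample rec p (maxn t1 t2) signed_m.
  apply: sub_in_count => q q_sample correct_q /=.
  by rewrite (rec_stable correct_p (leq_maxl t1 t2) (rec_t1 q q_sample correct_q)).
apply: leq_trans count_correct.
rewrite -(leq_add2l (count (predC correct) (sample p))).
rewrite [leqRHS]addnC count_predC.
by rewrite size_tuple; exact: few_byzantine.
Qed.

Lemma dlv_correct p t m' : correct p -> dlv p t = Some m' -> m' = m.
Proof.
move=> correct_p /(dlv_valid correct_p) [t' _ [s [echo_p _]]].
by case: (echo_correct correct_p echo_p).
Qed.

Lemma correct_delivers p : correct p -> exists t, dlv p t = Some m.
Proof.
move=> correct_p; have [t cond_t] := deliver_cond_eventually correct_p.
have := dlv_live correct_p cond_t.
case dlv_p: (dlv p t) => [m'|] // _.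
by exists t; rewrite dlv_p (dlv_correct correct_p dlv_p).
Qed.

End CorrectSender.

Theorem lemma5 (Proc : finType) (Msg Sig : eqType)
  (correct : pred Proc) (sigma : Proc) (m : Msg)
  (sign : Proc -> Msg -> Sig) (valid : Proc -> Msg -> Sig -> bool)
  (E Ehat : nat) (sample : Proc -> E.-tuple Proc)
  (pbd : Proc -> nat -> option (Msg * Sig))
  (rec : Proc -> Proc -> nat -> option (Msg * Sig))
  (dlv : Proc -> nat -> option Msg) :
  sieve_execution correct sigma m sign valid Ehat sample pbd rec dlv ->
  correct sigma ->
  pb_totality correct pbd ->
  (* no correct process has more than E - Ehat Byzantine sample entries *)
  (forall p, correct p -> count (fun q => ~~ correct q) (sample p) + Ehat <= E) ->
  forall p, correct p -> exists t, dlv p t = Some m.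
Proof.
move=> [[sign_valid _] [pbd_stable pbd_sender pbd_validity]
        [rec_stable _ rec_authentic rec_reliable] [_ dlv_valid dlv_live]].
move=> correct_sigma totality few_byzantine.
exact: (correct_delivers sign_valid pbd_stable (pbd_sender correct_sigma)
  (pbd_validity correct_sigma) correct_sigma totality rec_stable rec_authentic
  rec_reliable dlv_valid dlv_live few_byzantine).
Qed.
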